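(* Fix any number of agents and items and any reported strict linear orders of all agents over all items, and consider the simultaneous eating algorithm in two scenarios. In the normal scenario, all agents eat according to the algorithm throughout. In the pause scenario, the process is identical to the normal scenario up to a time $t$; from time $t$ on, some set $S$ of agents is paused (eats nothing) for some period of time (of arbitrary length, possibly forever), after which these agents resume eating according to the algorithm, while all agents outside $S$ continue eating according to the algorithm throughout. Then for every item and every moment $s \ge t$ (up to the moment the item is exhausted in the normal scenario), the remaining amount of that item at time $s$ in the pause scenario is at least its remaining amount at time $s$ in the normal scenario.
   Context: Simultaneous eating algorithm: there are agents and divisible items of unit supply; each agent has a reported strict linear order over all items. Every non-paused agent consumes, at rate $1$ per unit time, its most preferred item (according to its report) among the items with positive remaining supply; when an item is exhausted, the agents consuming it move on to their most preferred item still having positive remaining supply. A paused agent consumes nothing while paused. *)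

From Stdlib Require Import Reals.
From mathcomp Require Import all_boot.

Set Implicit Arguments.
Unset Strict Implicit.
Unset Printing Implicit Defensive.
Local Open Scope R_scope.

Definition strict_linear_order (I : finType) (r : rel I) : Prop :=
  irreflexive r /\ transitive r /\ (forall i j : I, i != j -> r i j || r j i).

(* c a i s = amount of item i eaten by agent a during [0, s].
   Remaining supply of item i at time s (each item has unit supply). *)
Definition remaining (A I : finType) (c : A -> I -> R -> R) (i : I) (s : R) : R :=
  (1 - \big[Rplus/0]_(a : A) c a i s).

(* i is agent a's most preferred item (pref a i j = "a strictly prefers i to j")
   among the items with positive remaining supply rem. *)
Definition top_item (A I : finType) (pref : A -> rel I) (rem : I -> R) (a : A) (i : I)
  : Prop :=
  (0 < rem i) /\ (forall j : I, j != i -> (0 < rem j) -> pref a i j).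

Definition right_deriv (f : R -> R) (s l : R) : Prop :=
  forall eps : R, (0 < eps) -> exists delta : R, (0 < delta) /\
    forall h : R, (0 < h < delta) -> (Rabs ((f (s + h) - f s) / h - l) < eps).

(* c is a run of the simultaneous eating algorithm from time 0, where
   active a s says that agent a is not paused at time s: at every time s >= 0
   each active agent eats (at rate 1) its most preferred item with positive
   remaining supply, and nothing else; paused agents eat nothing. *)
Definition eating_process (A I : finType) (pref : A -> rel I)
  (active : A -> R -> Prop) (c : A -> I -> R -> R) : Prop :=
  (forall a i, c a i 0 = 0) /\
  (forall a i (s : R), (0 < s) -> continuity_pt (c a i) s) /\
  (forall a i (s : R), (0 <= s) ->
     let eating := active a s /\ top_item pref (fun j => remaining c j s) a i in
     (eating -> right_deriv (c a i) s 1) /\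
     (~ eating -> right_deriv (c a i) s 0)).

(* Activity in the pause scenario: agents in S are paused from time t on,
   until time t' if e = Some t', forever if e = None. *)
Definition pause_active (A : finType) (S : {set A}) (t : R) (e : option R)
  (a : A) (u : R) : Prop :=
  ~ (a \in S /\ (t <= u) /\
     match e with Some t' => (u < t') | None => True end).

(* The invariant "every
   item has at least as much supply left in the pause run as in the normal run" is pushed
   forward in time by real induction.  It survives left limits by continuity.  It extends to
   the right because, while it holds, every item available in the normal run is available in
   the pause run: an item with strictly more supply left in the pause run keeps more for a
   short while, and an item with equal supply is eaten in the pause run, on a short interval,
   only by agents who also eat it in the normal run, since they rank it above every item
   available there.  Consumption is recovered from the right derivatives of the process by a
   Dini-type mean value inequality. *)

From Stdlib Require Import Reals.
From mathcomp Require Import all_boot.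
From Stdlib Require Import Lra Classical.
From HB Require Import structures.

Set Implicit Arguments.
Unset Strict Implicit.
Local Open Scope R_scope.

Definition eventually_right (P : R -> Prop) : Prop :=
  exists2 d, 0 < d & forall h, 0 < h < d -> P h.

Lemma eventually_right_and (P Q : R -> Prop) :
  eventually_right P -> eventually_right Q -> eventually_right (fun h => P h /\ Q h).
Proof.
move=> [d1 d1_gt0 P_near] [d2 d2_gt0 Q_near].
exists (Rmin d1 d2); first exact: Rmin_glb_lt.
have := Rmin_l d1 d2; have := Rmin_r d1 d2.
by move=> ? ? h hd; split; [apply: P_near | apply: Q_near]; lra.
Qed.

Lemma eventually_right_forall (T : finType) (P : T -> R -> Prop) :
  (forall x, eventually_right (P x)) -> eventually_right (fun h => forall x, P x h).
Proof.
move=> P_near; suff [d d_gt0 Pd] : eventually_right (fun h => forall x, x \in enum T -> P x h).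
  by exists d => // h hd x; apply: Pd; rewrite ?mem_enum.
elim: (enum T) => [|y s IH]; first by exists 1 => [|h _ x]; [lra | rewrite in_nil].
have [d d_gt0 Pd] := eventually_right_and (P_near y) IH.
exists d => // h hd x; rewrite inE => /predU1P [->|xs]; first exact: (Pd h hd).1.
exact: (Pd h hd).2 x xs.
Qed.

Lemma real_induction (a : R) (P : R -> Prop) :
  (forall c, a <= c -> (forall u, a <= u < c -> P u) -> P c) ->
  (forall c, a <= c -> (forall u, a <= u <= c -> P u) -> eventually_right (fun h => P (c + h))) ->
  forall s, a <= s -> P s.
Proof.
move=> left_closed right_open s a_le_s; apply: NNPP => not_Ps.
pose E x := a <= x <= s /\ forall u, a <= u < x -> P u.
have E_bounded : bound E by exists s => x [[_ ?] _].
have E_inhabited : exists x, E x by exists a; split=> [|u]; lra.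
have [m [m_ub m_lub]] := completeness E E_bounded E_inhabited.
have a_le_m : a <= m by apply: m_ub; split=> [|u]; lra.
have P_below_m : forall u, a <= u < m -> P u.
  move=> u u_lt_m; apply: NNPP => not_Pu; suff : m <= u by lra.
  apply: m_lub => x [_ Px]; apply: Rnot_lt_le => u_lt_x; apply/not_Pu/Px; lra.
have Pm : P m by exact: left_closed.
have P_upto_m : forall u, a <= u <= m -> P u.
  by move=> u [au [um|->]] //; apply: P_below_m.
have m_lt_s : m < s.
  have : m <= s by apply: m_lub => x [[_ ?] _].
  by case=> // m_eq_s; case: not_Ps; rewrite -m_eq_s.
have [d d_gt0 P_right] := right_open m a_le_m P_upto_m.
have x_le := Rmin_l (m + d / 2) s; have x_le_s := Rmin_r (m + d / 2) s.
have m_lt_x : m < Rmin (m + d / 2) s by apply: Rmin_glb_lt; lra.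
set x := Rmin (m + d / 2) s in x_le x_le_s m_lt_x *.
suff : x <= m by lra.
apply: m_ub; split=> [|u u_lt]; first lra.
have [u_le_m|m_lt_u] := Rle_lt_dec u m; first by apply: P_upto_m; lra.
rewrite -(Rplus_minus m u); apply: P_right; lra.
Qed.

Lemma ge0_of_left_limit (g : R -> R) (a c : R) :
  a < c -> continuity_pt g c -> (forall u, a <= u < c -> 0 <= g u) -> 0 <= g c.
Proof.
move=> a_lt_c g_cont g_ge0; apply: Rnot_lt_le => gc_lt0.
have [d [d_gt0 g_near]] := g_cont (- g c) ltac:(lra).
pose u := Rmax a (c - d / 2).
have u_lt_c : u < c by apply: Rmax_lub_lt; lra.
have gu_ge0 : 0 <= g u by apply: g_ge0; split; [apply: Rmax_l | exact: u_lt_c].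
have := Rmax_r a (c - d / 2); rewrite -/u => u_ge.
have /Rabs_def2 : Rabs (g u - g c) < - g c.
  apply: g_near; split; first by split=> //; lra.
  by rewrite /= /R_dist Rabs_left; lra.
lra.
Qed.

Lemma continuity_pt_sub_affine (f : R -> R) (p q r x : R) :
  continuity_pt f x -> continuity_pt (fun u => f u - (p + q * (u - r))) x.
Proof.
move=> f_cont; apply: (continuity_pt_minus f (fun u => p + q * (u - r))) => //.
by apply: derivable_continuous_pt; reg.
Qed.

Definition lower_right_dini_ge (f : R -> R) (x m : R) : Prop :=
  forall eps, 0 < eps -> eventually_right (fun h => (m - eps) * h <= f (x + h) - f x).

Lemma dini_ge_increment (f : R -> R) (a b m : R) :
  (forall x, a <= x < b -> lower_right_dini_ge f x m) ->
  (forall x, a < x <= b -> continuity_pt f x) -> a <= b ->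
  m * (b - a) <= f b - f a.
Proof.
move=> dini f_cont a_le_b.
suff slack : forall eps, 0 < eps -> (m - eps) * (b - a) <= f b - f a.
  apply: Rle_plus_epsilon => eps eps_gt0.
  have k_gt0 : 0 < eps / (b - a + 1) by apply: Rdiv_lt_0_compat; lra.
  have : eps / (b - a + 1) * (b - a + 1) = eps by field; lra.
  have := slack _ k_gt0; nra.
move=> eps eps_gt0.
pose g u := f u - (f a + (m - eps) * (u - a)).
suff g_ge0 : forall u, a <= u -> u <= b -> 0 <= g u.
  by have := g_ge0 b a_le_b (Rle_refl b); rewrite /g; lra.
apply: real_induction => [c a_le_c g_below c_le_b | c a_le_c g_upto].
  have [a_lt_c|<-] := Rle_lt_or_eq_dec a c a_le_c; last by rewrite /g Rminus_diag; lra.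
  apply: (ge0_of_left_limit a_lt_c); first by apply/continuity_pt_sub_affine/f_cont; lra.
  by move=> u u_in; apply: g_below; lra.
have [c_lt_b|b_le_c] := Rlt_le_dec c b; last by exists 1 => [|h h_in]; lra.
have [d d_gt0 f_incr] := dini c (conj a_le_c c_lt_b) eps eps_gt0.
exists d => // h h_in _; have := f_incr h h_in.
have := g_upto c (conj a_le_c (Rle_refl c)) (Rlt_le _ _ c_lt_b); rewrite /g; nra.
Qed.

Lemma right_deriv_dini_ge (f : R -> R) (x l m : R) :
  right_deriv f x l -> m <= l -> lower_right_dini_ge f x m.
Proof.
move=> f_deriv m_le_l eps eps_gt0; have [d [d_gt0 f_near]] := f_deriv eps eps_gt0.
exists d => // h h_in; have /Rabs_def2 [_ slope_gt] := f_near h h_in.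
have -> : f (x + h) - f x = (f (x + h) - f x) / h * h by field; lra.
apply: Rmult_le_compat_r; lra.
Qed.

Lemma right_deriv_opp (f : R -> R) (x l : R) :
  right_deriv f x l -> right_deriv (fun y => - f y) x (- l).
Proof.
move=> f_deriv eps eps_gt0; have [d [d_gt0 f_near]] := f_deriv eps eps_gt0.
exists d; split=> // h h_in.
have -> : (- f (x + h) - - f x) / h - - l = - ((f (x + h) - f x) / h - l) by field; lra.
by rewrite Rabs_Ropp; apply: f_near.
Qed.

Lemma right_deriv_increment_bounds (f : R -> R) (a b m M : R) :
  (forall x, a <= x < b -> exists2 l, m <= l <= M & right_deriv f x l) ->
  (forall x, a < x <= b -> continuity_pt f x) -> a <= b ->
  m * (b - a) <= f b - f a <= M * (b - a).
Proof.
move=> f_deriv f_cont a_le_b; split.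
  apply: dini_ge_increment => // x x_in; have [l [m_le_l _] fl] := f_deriv x x_in.
  exact: right_deriv_dini_ge fl m_le_l.
suff : - M * (b - a) <= - f b - - f a by lra.
apply: (@dini_ge_increment (fun y => - f y)) => // [x x_in|x x_in].
  have [l [_ l_le_M] fl] := f_deriv x x_in.
  by apply: right_deriv_dini_ge (right_deriv_opp fl) _; lra.
exact/continuity_pt_opp/f_cont.
Qed.

HB.instance Definition _ := Monoid.isComLaw.Build R 0 Rplus
  (fun x y z => esym (Rplus_assoc x y z)) Rplus_comm Rplus_0_l.

Lemma big_Rplus_le (T : finType) (F G : T -> R) :
  (forall x, F x <= G x) -> \big[Rplus/0]_(x : T) F x <= \big[Rplus/0]_(x : T) G x.
Proof. by move=> FG; apply: (big_ind2 Rle) => // *; [lra | apply: Rplus_le_compat]. Qed.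

Lemma big_Rplus_const (T : finType) (r : R) : \big[Rplus/0]_(x : T) r = INR #|T| * r.
Proof.
rewrite big_const; elim: #|T| => [|n IH]; first by rewrite /=; ring.
by rewrite iterS IH S_INR; ring.
Qed.

Lemma continuity_pt_big_Rplus (T : finType) (F : T -> R -> R) (x : R) :
  (forall y, continuity_pt (F y) x) ->
  continuity_pt (fun s => \big[Rplus/0]_(y : T) F y s) x.
Proof.
move=> F_cont; elim: (index_enum T) => [|y r IH].
  apply: (@continuity_pt_locally_ext (fun _ => 0) _ 1) => [|s _|]; first lra.
    by rewrite big_nil.
  exact: continuity_pt_const.
apply: (@continuity_pt_locally_ext (F y + fun s => \big[Rplus/0]_(z <- r) F z s)%F _ 1).
- lra.
- by move=> s _; rewrite big_cons.
- exact: continuity_pt_plus.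
Qed.

Lemma top_item_ext (A I : finType) (pref : A -> rel I) (r1 r2 : I -> R) (a : A) (i : I) :
  (forall j, 0 < r1 j <-> 0 < r2 j) -> top_item pref r1 a i -> top_item pref r2 a i.
Proof.
move=> same_sign [ri_gt0 i_top]; split; first exact/same_sign.
by move=> j j_neq_i rj_gt0; apply: i_top => //; apply/same_sign.
Qed.

Lemma top_item_of_le_supply (A I : finType) (pref : A -> rel I) (r1 r2 : I -> R) (a : A) (i : I) :
  (forall j, r1 j <= r2 j) -> r1 i = r2 i -> top_item pref r2 a i -> top_item pref r1 a i.
Proof.
move=> r1_le_r2 ri_eq [ri_gt0 i_top]; split; first lra.
by move=> j j_neq_i r1j_gt0; apply: i_top => //; have := r1_le_r2 j; lra.
Qed.

Section EatingProcess.
Variables (A I : finType) (pref : A -> rel I) (active : A -> R -> Prop) (c : A -> I -> R -> R).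
Hypothesis process : eating_process pref active c.

Definition eating (a : A) (i : I) (s : R) : Prop :=
  active a s /\ top_item pref (fun j => remaining c j s) a i.

Lemma remaining_at0 (i : I) : remaining c i 0 = 1.
Proof. by have [c0 _] := process; rewrite /remaining big1 => [|a _]; [ring | apply: c0]. Qed.

Lemma consumption_rate (a : A) (i : I) (s : R) :
  0 <= s -> exists2 l, 0 <= l <= 1 & right_deriv (c a i) s l.
Proof.
move=> s_ge0; have [_ [_ rates]] := process; have [eat_rate idle_rate] := rates a i s s_ge0.
by case: (classic (eating a i s)) => [/eat_rate|/idle_rate]; [exists 1 | exists 0] => //; lra.
Qed.

Lemma consumption_on_interval (a : A) (i : I) (u v l : R) :
  0 <= u <= v -> (forall x, u <= x < v -> right_deriv (c a i) x l) ->
  c a i v = c a i u + l * (v - u).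
Proof.
move=> uv c_deriv; have [_ [c_cont _]] := process.
suff : l * (v - u) <= c a i v - c a i u <= l * (v - u) by lra.
apply: right_deriv_increment_bounds => [x x_in|x x_in|]; last lra.
  by exists l; [lra | apply: c_deriv].
apply: c_cont; lra.
Qed.

Lemma consumption_increment (a : A) (i : I) (u v : R) :
  0 <= u <= v -> 0 <= c a i v - c a i u <= v - u.
Proof.
move=> uv; have [_ [c_cont _]] := process.
suff : 0 * (v - u) <= c a i v - c a i u <= 1 * (v - u) by lra.
apply: right_deriv_increment_bounds => [x x_in|x x_in|]; last lra.
  by apply: consumption_rate; lra.
apply: c_cont; lra.
Qed.

Lemma remaining_increment (i : I) (u v : R) :
  0 <= u <= v ->
  remaining c i u - INR #|A| * (v - u) <= remaining c i v <= remaining c i u.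
Proof.
move=> uv; rewrite /remaining.
have incr := consumption_increment _ i uv.
have : \big[Rplus/0]_a c a i v <= \big[Rplus/0]_a (c a i u + (v - u)).
  by apply: big_Rplus_le => a; have := incr a; lra.
have : \big[Rplus/0]_a c a i u <= \big[Rplus/0]_a c a i v.
  by apply: big_Rplus_le => a; have := incr a; lra.
by rewrite big_split big_Rplus_const /=; lra.
Qed.

Lemma remaining_continuous (i : I) (s : R) : 0 < s -> continuity_pt (remaining c i) s.
Proof.
move=> s_gt0; have [_ [c_cont _]] := process.
apply: (continuity_pt_minus (fun _ => 1)); first exact: continuity_pt_const.
by apply: continuity_pt_big_Rplus => a; apply: c_cont.
Qed.

Lemma remaining_eventually_gt (i : I) (s r : R) :
  0 <= s -> r < remaining c i s -> eventually_right (fun h => r < remaining c i (s + h)).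
Proof.
move=> s_ge0 r_lt; have nA_ge0 := pos_INR #|A|.
pose d := (remaining c i s - r) / (INR #|A| + 1).
have d_def : d * (INR #|A| + 1) = remaining c i s - r by rewrite /d; field; lra.
exists d => [|h [h_gt0 h_lt]]; first by apply: Rdiv_lt_0_compat; lra.
have [drop _] := remaining_increment i (u := s) (v := s + h) ltac:(lra).
rewrite Rplus_minus_l in drop; nra.
Qed.

Lemma supply_sign_eventually_const (i : I) (s : R) :
  0 <= s -> eventually_right (fun h => 0 < remaining c i (s + h) <-> 0 < remaining c i s).
Proof.
move=> s_ge0; have [ri_gt0|ri_le0] := Rlt_le_dec 0 (remaining c i s).
  have [d d_gt0 pos] := remaining_eventually_gt s_ge0 ri_gt0.
  by exists d => // h h_in; split=> // _; apply: pos.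
exists 1 => [|h h_in]; first lra.
have [_ decr] := remaining_increment i (u := s) (v := s + h) ltac:(lra); lra.
Qed.

Lemma consumption_eventually (s : R) :
  0 <= s -> (forall a, eventually_right (fun h => active a (s + h) <-> active a s)) ->
  eventually_right (fun h => forall a i,
    (eating a i s -> c a i (s + h) = c a i s + h) /\ (~ eating a i s -> c a i (s + h) = c a i s)).
Proof.
move=> s_ge0 active_near.
have [d d_gt0 stable] := eventually_right_and (eventually_right_forall active_near)
  (eventually_right_forall (fun j => supply_sign_eventually_const j s_ge0)).
have eating_near : forall a i h, 0 < h < d -> eating a i (s + h) <-> eating a i s.
  move=> a i h h_in; have [act_eq sign_eq] := stable h h_in.
  split=> -[act top]; split.
  - exact/(act_eq a).
  - exact: top_item_ext sign_eq top.
  - exact/(act_eq a).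
  - exact: top_item_ext (fun j => iff_sym (sign_eq j)) top.
exists d => // h [h_gt0 h_lt] a i.
have eating_on : forall x, s <= x < s + h -> eating a i x <-> eating a i s.
  move=> x [[s_lt_x|<-] x_lt] //; rewrite -(Rplus_minus s x); apply: eating_near; lra.
have [_ [_ rates]] := process.
split=> eat_s.
  rewrite (@consumption_on_interval a i s (s + h) 1) => [|//|x x_in]; first ring; first lra.
  by apply: (rates a i x ltac:(lra)).1; apply/eating_on.
rewrite (@consumption_on_interval a i s (s + h) 0) => [|//|x x_in]; first ring; first lra.
by apply: (rates a i x ltac:(lra)).2 => /eating_on /eat_s.
Qed.

End EatingProcess.

Section Comparison.
Variables (A I : finType) (pref : A -> rel I) (activeN activeP : A -> R -> Prop).
Variables (cN cP : A -> I -> R -> R).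
Hypotheses (processN : eating_process pref activeN cN) (processP : eating_process pref activeP cP).
Hypothesis activeP_activeN : forall a s, activeP a s -> activeN a s.
Hypothesis activeN_stable :
  forall s, 0 <= s -> forall a, eventually_right (fun h => activeN a (s + h) <-> activeN a s).
Hypothesis activeP_stable :
  forall s, 0 <= s -> forall a, eventually_right (fun h => activeP a (s + h) <-> activeP a s).

Local Notation supply_le s := (forall i, remaining cN i s <= remaining cP i s).

Lemma supply_le_left_closed (s : R) :
  0 <= s -> (forall u, 0 <= u < s -> supply_le u) -> supply_le s.
Proof.
move=> s_ge0 below i; have [s_gt0|<-] := Rle_lt_or_eq_dec 0 s s_ge0; last first.
  by rewrite (remaining_at0 processN) (remaining_at0 processP); lra.
suff : 0 <= remaining cP i s - remaining cN i s by lra.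
apply: (@ge0_of_left_limit (fun u => remaining cP i u - remaining cN i u) 0 s s_gt0).
  exact (continuity_pt_minus _ _ _
    (remaining_continuous processP i s_gt0) (remaining_continuous processN i s_gt0)).
by move=> u u_in; have := below u u_in i; lra.
Qed.

Lemma consumption_le_of_supply_eq (s : R) (i : I) :
  0 <= s -> supply_le s -> remaining cN i s = remaining cP i s ->
  eventually_right (fun h => forall a, cP a i (s + h) + cN a i s <= cN a i (s + h) + cP a i s).
Proof.
move=> s_ge0 le_s eq_i.
have [d d_gt0 near] := eventually_right_and
  (consumption_eventually processN s_ge0 (activeN_stable s_ge0))
  (consumption_eventually processP s_ge0 (activeP_stable s_ge0)).
exists d => // h h_in a; have [nearN nearP] := near h h_in.
case: (classic (eating pref activeP cP a i s)) => [eatP|not_eatP].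
  have eatN : eating pref activeN cN a i s.
    have [act top] := eatP.
    by split; [exact: activeP_activeN | exact: top_item_of_le_supply le_s eq_i top].
  by rewrite ((nearN a i).1 eatN) ((nearP a i).1 eatP); lra.
rewrite ((nearP a i).2 not_eatP).
have := consumption_increment processN a i (u := s) (v := s + h) ltac:(lra); lra.
Qed.

Lemma supply_le_extends_right (s : R) :
  0 <= s -> supply_le s -> eventually_right (fun h => supply_le (s + h)).
Proof.
move=> s_ge0 le_s; apply: eventually_right_forall => i.
have [lt_i|eq_i] := Rle_lt_or_eq_dec _ _ (le_s i).
  have [d d_gt0 gtP] := remaining_eventually_gt processP s_ge0 lt_i.
  exists d => // h h_in; have := gtP h h_in.
  have [_ decrN] := remaining_increment processN i (u := s) (v := s + h) ltac:(lra); lra.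
have [d d_gt0 le_cons] := consumption_le_of_supply_eq s_ge0 le_s eq_i.
exists d => // h h_in; have := big_Rplus_le (le_cons h h_in).
by move: eq_i; rewrite /remaining !big_split /=; lra.
Qed.

Theorem supply_le_of_fewer_active (s : R) : 0 <= s -> supply_le s.
Proof.
apply: (@real_induction 0 (fun s => supply_le s)) => [c c_ge0|c c_ge0 upto].
  exact: supply_le_left_closed.
by apply: supply_le_extends_right => //; apply: upto; lra.
Qed.

End Comparison.

Lemma pause_active_stable (A : finType) (S : {set A}) (t : R) (e : option R) (s : R) (a : A) :
  eventually_right (fun h => pause_active S t e a (s + h) <-> pause_active S t e a s).
Proof.
have start : eventually_right (fun h => t <= s + h <-> t <= s).
  case: (Rlt_le_dec s t) => [s_lt_t|t_le_s].
    by exists (t - s) => [|h h_in]; [lra | split=> ?; lra].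
  by exists 1 => [|h h_in]; [lra | split=> ?; lra].
have stop : eventually_right (fun h =>
    match e with Some t' => s + h < t' | None => True end <->
    match e with Some t' => s < t' | None => True end).
  case: e => [t'|]; last by exists 1 => [|h _]; [lra | split].
  case: (Rlt_le_dec s t') => [s_lt_t'|t'_le_s].
    by exists (t' - s) => [|h h_in]; [lra | split=> ?; lra].
  by exists 1 => [|h h_in]; [lra | split=> ?; lra].
have [d d_gt0 both] := eventually_right_and start stop.
by exists d => // h h_in; have := both h h_in; rewrite /pause_active; tauto.
Qed.

Theorem lemma2 (A I : finType) (pref : A -> rel I)
  (Hpref : forall a : A, strict_linear_order (pref a))
  (S : {set A}) (t : R) (e : option R)
  (ht : (0 <= t))
  (he : match e with Some t' => (t <= t') | None => True end)
  (cN cP : A -> I -> R -> R)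
  (HN : eating_process pref (fun _ _ => True) cN)
  (HP : eating_process pref (pause_active S t e) cP) :
  forall (i : I) (s : R), (t <= s) ->
    (forall u : R, (0 <= u < s) -> (0 < remaining cN i u)) ->
    (remaining cN i s <= remaining cP i s).
Proof.
move=> i s t_le_s _.
apply: (supply_le_of_fewer_active HN HP) => [//|u _ a|u _ a|]; last lra.
  by exists 1 => [|h _]; [lra | split].
exact: pause_active_stable.
Qed.
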